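(* Let $\mathcal{O}$ be a unital JB-algebra satisfying the Strong Stone–Weierstrass property: for every Jordan subalgebra $B$ of $\mathcal{O}$, if $B$ separates $P(\mathcal{O})\cup\{0\}$, then $B=\mathcal{O}$. Let $\mathcal{C}\subset\mathcal{O}$ satisfy: (i) $\mathcal{C}$ separates the pure states of $\mathcal{O}$; (ii) for every $c\in\mathcal{C}$ and every continuous non-decreasing function $f:\mathbb{R}\to\mathbb{R}$, we have $f(c)\in\mathcal{C}$; (iii) $\mathcal{C}$ is norm closed; (iv) $c_1+c_2\in\mathcal{C}$ for all $c_1,c_2\in\mathcal{C}$. Then $\mathcal{C}$ separates the states of $\mathcal{O}$: for any two distinct states $s_1\neq s_2$ of $\mathcal{O}$ there exists $c\in\mathcal{C}$ with $s_1(c)\neq s_2(c)$.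
   Context: A JB-algebra is a real Jordan Banach algebra with the usual JB-norm axioms; it has continuous functional calculus $a\mapsto f(a)$ for each element $a$ and continuous real function $f$ on its spectrum. States are the normalized positive linear functionals, and $P(\mathcal{O})$ is the set of pure (extreme) states. A subset $B$ separates $P(\mathcal{O})\cup\{0\}$ if for any two distinct elements $\phi\neq\psi$ of $P(\mathcal{O})\cup\{0\}$ (where $0$ is the zero functional) there is $b\in B$ with $\phi(b)\neq\psi(b)$. *)

From HB Require Import structures.
From mathcomp Require Import all_boot all_order all_algebra.
From mathcomp Require Import all_classical all_reals all_analysis.
Set Implicit Arguments. Unset Strict Implicit. Unset Printing Implicit Defensive.
Import Order.TTheory GRing.Theory Num.Theory.
Import numFieldNormedType.Exports.
Local Open Scope classical_set_scope.
Local Open Scope ring_scope.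

Section JB.
Variables (R : realType) (V : completeNormedModType R).
Variables (jm : V -> V -> V) (e : V).

Definition unital_JB_algebra : Prop :=
  (forall (a : R) x y z, jm (a *: x + y) z = a *: jm x z + jm y z) /\
  (forall x y, jm x y = jm y x) /\
  (forall x y, jm (jm x y) (jm x x) = jm x (jm y (jm x x))) /\
  (forall x, jm e x = x) /\
  (forall x y, `|jm x y| <= `|x| * `|y|) /\
  (forall x, `|jm x x| = `|x| ^+ 2) /\
  (forall x y, `|jm x x| <= `|jm x x + jm y y|).

Fixpoint jpow (x : V) (n : nat) : V :=
  if n is n'.+1 then jm x (jpow x n') else e.

Definition jpeval (p : {poly R}) (x : V) : V :=
  \sum_(i < size p) p`_i *: jpow x i.

(* Continuous functional calculus: x = f(a) iff x is the limit of p_n(a)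
   for polynomials p_n converging uniformly to f on [-|a|, |a|]
   (an interval containing the spectrum of a). *)
Definition fcalc (a : V) (f : R -> R) (x : V) : Prop :=
  exists p : nat -> {poly R},
    (forall eps : R, 0 < eps -> \forall n \near \oo,
        forall t : R, `|t| <= `|a| -> `|(p n).[t] - f t| < eps) /\
    ((fun n => jpeval (p n) a) @ \oo --> x).

(* States: normalized positive linear functionals (positive = nonnegative
   on squares, i.e. on the positive cone). *)
Definition is_state (s : V -> R) : Prop :=
  [/\ (forall (a : R) x y, s (a *: x + y) = a * s x + s y),
      (forall x, 0 <= s (jm x x)) &
      s e = 1].

Definition is_pure_state (s : V -> R) : Prop :=
  is_state s /\
  forall (s1 s2 : V -> R) (t : R), is_state s1 -> is_state s2 ->
    0 < t < 1 -> (forall x, s x = t * s1 x + (1 - t) * s2 x) ->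
    (forall x, s1 x = s x) /\ (forall x, s2 x = s x).

Definition separates (B : set V) (S : set (V -> R)) : Prop :=
  forall phi psi, S phi -> S psi -> phi <> psi ->
    exists b, B b /\ phi b <> psi b.

Definition jordan_subalgebra (B : set V) : Prop :=
  [/\ B 0, (forall (a : R) x y, B x -> B y -> B (a *: x + y)),
      (forall x y, B x -> B y -> B (jm x y)) & closed B].

Definition strong_stone_weierstrass : Prop :=
  forall B : set V, jordan_subalgebra B ->
    separates B [set phi | is_pure_state phi \/ phi = (fun _ => 0)] ->
    B = setT.

End JB.

(* The hypotheses make [C] a convex cone absorbing shifts [c + k e] (apply
   the nondecreasing maps [t |-> a t], [a >= 0], and [t |-> t + k]), so
   [Cpos = C u R_+ e] is again such a cone and [Cdiff = Cpos - Cpos] is a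
   linear subspace containing [e].  Both [t^3 + t^2 + t] and [t^3 - t^2 + t] are
   nondecreasing, hence [c^2] is in [Cdiff] for [c] in [C]; by polarization
   [Cdiff] is a Jordan subalgebra, and so is its norm closure.  That closure separates pure
   states (because [C] does) and separates every state from [0] (via [e]), so
   by the Strong Stone-Weierstrass property it is the whole algebra.  States
   are norm continuous ([|s x| <= 2|x|], from the square root of [e - x] for
   [|x| <= 1/2] given by Banach's fixed point theorem), so two states agreeing
   on [C] agree everywhere. *)

From HB Require Import structures.
From mathcomp Require Import all_boot all_order all_algebra.
From mathcomp Require Import all_classical all_reals all_analysis.
From mathcomp Require Import ring lra.
Import Order.TTheory GRing.Theory Num.Theory.
Import numFieldNormedType.Exports.
Local Open Scope classical_set_scope.
Local Open Scope ring_scope.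
Set Implicit Arguments.
Unset Strict Implicit.

Section NormClosure.
Variables (R : realType) (V : normedModType R).

Lemma closure_normP (A : set V) x :
  closure A x <-> forall eps : R, 0 < eps -> exists2 d, A d & `|x - d| < eps.
Proof.
split=> [clAx eps eps0|approx B /nbhs_ballP[eps /= eps0 xepsB]].
  have [d [Ad xd]] := clAx _ (nbhsx_ballx x eps eps0).
  by exists d; move: xd; rewrite -ball_normE.
have [d Ad xd] := approx eps eps0.
by exists d; split=> //; apply: xepsB; rewrite -ball_normE.
Qed.

Lemma closure_lin (A : set V) :
    (forall (a : R) x y, A x -> A y -> A (a *: x + y)) ->
  forall (a : R) x y, closure A x -> closure A y -> closure A (a *: x + y).
Proof.
move=> linA a x y /closure_normP clAx /closure_normP clAy.
apply/closure_normP => eps eps0.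
have a1 : 0 < `|a| + 1 by rewrite ltr_pwDr.
have eta0 : 0 < eps / (`|a| + 1) by rewrite divr_gt0.
have [d1 Ad1 xd1] := clAx _ eta0; have [d2 Ad2 yd2] := clAy _ eta0.
exists (a *: d1 + d2); first exact: linA.
rewrite opprD addrACA -scalerBr.
apply: le_lt_trans (ler_normD _ _) _; rewrite normrZ.
have axd1 : `|a| * `|x - d1| <= `|a| * (eps / (`|a| + 1)) by rewrite ler_wpM2l // ltW.
have -> : eps = `|a| * (eps / (`|a| + 1)) + eps / (`|a| + 1) by field; rewrite gt_eqF.
exact: ler_ltD.
Qed.

End NormClosure.

Section JordanAlgebra.
Variables (R : realType) (V : completeNormedModType R).
Variables (jm : V -> V -> V) (e : V).
Hypothesis jbV : unital_JB_algebra jm e.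

Lemma jm_lin (a : R) x y z : jm (a *: x + y) z = a *: jm x z + jm y z.
Proof. by case: jbV. Qed.

Lemma jmC x y : jm x y = jm y x.
Proof. by case: jbV => _ []. Qed.

Lemma jm1l x : jm e x = x.
Proof. by case: jbV => _ [_ [_ []]]. Qed.

Lemma jm1r x : jm x e = x.
Proof. by rewrite jmC jm1l. Qed.

Lemma jpow1 x : jpow jm e x 1 = x.
Proof. exact: jm1r. Qed.

Lemma jm_normM x y : `|jm x y| <= `|x| * `|y|.
Proof. by case: jbV => _ [_ [_ [_ []]]]. Qed.

Lemma jmDl x y z : jm (x + y) z = jm x z + jm y z.
Proof. by rewrite -[x]scale1r jm_lin !scale1r. Qed.

Lemma jm0l z : jm 0 z = 0.
Proof. by apply: (addrI (jm 0 z)); rewrite addr0 -jmDl addr0. Qed.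

Lemma jmZl (a : R) x z : jm (a *: x) z = a *: jm x z.
Proof. by rewrite -[a *: x]addr0 jm_lin jm0l addr0. Qed.

Lemma jmNl x z : jm (- x) z = - jm x z.
Proof. by rewrite -scaleN1r jmZl scaleN1r. Qed.

Lemma jmBl x y z : jm (x - y) z = jm x z - jm y z.
Proof. by rewrite jmDl jmNl. Qed.

Lemma jmDr x y z : jm z (x + y) = jm z x + jm z y.
Proof. by rewrite !(jmC z) jmDl. Qed.

Lemma jmZr (a : R) x z : jm z (a *: x) = a *: jm z x.
Proof. by rewrite !(jmC z) jmZl. Qed.

Lemma jmNr x z : jm z (- x) = - jm z x.
Proof. by rewrite !(jmC z) jmNl. Qed.

Lemma jmBr x y z : jm z (x - y) = jm z x - jm z y.
Proof. by rewrite !(jmC z) jmBl. Qed.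

Lemma jm_sqrD x y : jm (x + y) (x + y) = jm x x + 2 *: jm x y + jm y y.
Proof. by rewrite jmDl !jmDr (jmC y x) scaler_nat mulr2n !addrA. Qed.

Lemma jm_polar x y : jm x y = 2^-1 *: (jm (x + y) (x + y) - jm x x - jm y y).
Proof.
rewrite jm_sqrD addrAC addrK [_ + 2 *: _]addrC addrK.
by rewrite scalerA mulVf ?scale1r ?pnatr_eq0.
Qed.

Lemma jm_subsqr x y : jm x x - jm y y = jm (x - y) (x + y).
Proof. by rewrite jmBl !jmDr (jmC y x) opprD addrA addrK. Qed.

(* [(e - z)^2 = e - x] iff [z] is a fixed point of [z |-> (x + z^2) / 2], a
   contraction of the closed ball of radius [1/2] when [|x| <= 1/2]. *)
Lemma exists_sqrt_e_sub x : `|x| <= 2^-1 -> exists y, jm y y = e - x.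
Proof.
move=> x_small.
pose U := [set z : V | `|z| <= 2^-1].
pose T z := 2^-1 *: (x + jm z z).
have TU : {homo T : z / U z >-> U z}.
  move=> z; rewrite /U /T /= normrZ ger0_norm ?invr_ge0 ?ler0n // => z_small.
  have zz : `|z| * `|z| <= 2^-1 * 2^-1 by apply: ler_pM.
  have := jm_normM z z; have := ler_normD x (jm z z); lra.
pose Tf : {fun U >-> U} := HB.pack T (isFun.Build _ _ U U T TU).
have T_contraction : is_contraction Tf.
  exists (2^-1)%:nng; split; first by rewrite /=; lra.
  move=> [a b] [/= Ua Ub] /=.
  rewrite /T -scalerBr normrZ ger0_norm ?invr_ge0 ?ler0n //.
  rewrite opprD addrA (addrC x) addrK jm_subsqr.
  have ab1 : `|a + b| <= 1 by apply: le_trans (ler_normD _ _) _; move: Ua Ub; rewrite /U /=; lra.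
  have : `|a - b| * `|a + b| <= `|a - b| by rewrite -[X in _ <= X]mulr1 ler_wpM2l.
  have := jm_normM (a - b) (a + b); lra.
have U_closed : closed U.
  have -> : U = closed_ball (0 : V) 2^-1.
    rewrite closed_ballE ?invr_gt0 ?ltr0n //; apply/seteqP; split => z;
    by rewrite /U /closed_ball_ /= sub0r normrN.
  exact: closed_ball_closed.
have U0 : U !=set0 by exists 0; rewrite /U /= normr0 invr_ge0 ler0n.
have [p _ Tp] := banach_fixed_point T_contraction U_closed U0.
exists (e - p).
have pp : jm p p = p + p - x.
  have : 2 *: p = x + jm p p.
    by rewrite [in LHS]Tp /= /T scalerA mulfV ?scale1r // pnatr_eq0.
  by rewrite scaler_nat mulr2n => ->; rewrite [x + _]addrC addrK.
rewrite jmBl !jmBr !jm1l jm1r pp opprB.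
by rewrite (addrAC (p + p)) addrK addrA subrK.
Qed.

Lemma closure_jm (A : set V) :
    (forall x y, A x -> A y -> A (jm x y)) ->
  forall x y, closure A x -> closure A y -> closure A (jm x y).
Proof.
move=> jmA x y /closure_normP clAx /closure_normP clAy.
apply/closure_normP => eps eps0.
pose M := `|x| + `|y| + 2.
have M0 : 0 < M by rewrite /M; have := normr_ge0 x; have := normr_ge0 y; lra.
pose eta := Num.min 1 (eps / M).
have eta0 : 0 < eta by rewrite lt_min ltr01 divr_gt0.
have eta1 : eta <= 1 by rewrite ge_min lexx.
have etaM : eta * M <= eps by rewrite -ler_pdivlMr // ge_min lexx orbT.
have [d1 Ad1 xd1] := clAx _ eta0; have [d2 Ad2 yd2] := clAy _ eta0.
exists (jm d1 d2); first exact: jmA.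
have -> : jm x y - jm d1 d2 = jm (x - d1) y + jm d1 (y - d2).
  by rewrite jmBl jmBr addrA subrK.
apply: le_lt_trans (ler_normD _ _) _.
have n1 := jm_normM (x - d1) y; have n2 := jm_normM d1 (y - d2).
have d1x : `|d1| <= `|x| + 1.
  by have := ler_distD x 0 d1; rewrite !sub0r !normrN; lra.
have t1 : `|x - d1| * `|y| <= eta * `|y| by rewrite ler_wpM2r // ltW.
have t2 : `|d1| * `|y - d2| <= (`|x| + 1) * eta by rewrite ler_pM // ltW.
rewrite /M in etaM; have := normr_ge0 x; have := normr_ge0 y; nra.
Qed.

End JordanAlgebra.

Section PolyCalculus.
Variables (R : realType) (V : completeNormedModType R).
Variables (jm : V -> V -> V) (e : V).

Lemma jpevalE n (p : {poly R}) c : (size p <= n)%N ->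
  jpeval jm e p c = \sum_(i < n) p`_i *: jpow jm e c i.
Proof.
move=> pn; rewrite /jpeval (big_ord_widen n (fun i => p`_i *: jpow jm e c i) pn).
rewrite big_mkcond; apply: eq_bigr => i _; case: ifPn => //.
by rewrite -leqNgt => /(nth_default 0) ->; rewrite scale0r.
Qed.

Lemma jpeval_lin (a : R) p q c :
  jpeval jm e (a *: p + q) c = a *: jpeval jm e p c + jpeval jm e q c.
Proof.
pose n := maxn (size p) (size q).
have pn : (size p <= n)%N by rewrite leq_maxl.
have qn : (size q <= n)%N by rewrite leq_maxr.
have apqn : (size (a *: p + q)%R <= n)%N.
  by apply: leq_trans (size_polyD _ _) _; rewrite geq_max qn (leq_trans (size_scale_leq _ _)).
rewrite !(jpevalE (n := n)) // scaler_sumr -big_split.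
by apply: eq_bigr => i _; rewrite coefD coefZ scalerDl scalerA.
Qed.

Lemma jpevalXn n c : jpeval jm e 'X^n c = jpow jm e c n.
Proof.
rewrite (jpevalE (n := n.+1)) ?size_polyXn // big_ord_recr /= coefXn eqxx scale1r.
by rewrite big1 ?add0r // => i _; rewrite coefXn ltn_eqF ?scale0r.
Qed.

Lemma jpevalC (k : R) c : jpeval jm e k%:P c = k *: e.
Proof. by rewrite (jpevalE (n := 1)) ?size_polyC ?leq_b1 // big_ord1 coefC. Qed.

Lemma fcalc_jpeval p c : fcalc jm e c (horner p) (jpeval jm e p c).
Proof.
exists (fun _ => p); split; last exact: cvg_cst.
by move=> eps eps0; apply: nearW => n t _; rewrite subrr normr0.
Qed.

End PolyCalculus.

Section States.
Variables (R : realType) (V : completeNormedModType R).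
Variables (jm : V -> V -> V) (e : V).
Hypothesis jbV : unital_JB_algebra jm e.

Section OneState.
Variable s : V -> R.
Hypothesis s_state : is_state jm e s.

Lemma state_lin (a : R) x y : s (a *: x + y) = a * s x + s y.
Proof. by case: s_state. Qed.

Lemma state_sqr_ge0 x : 0 <= s (jm x x).
Proof. by case: s_state. Qed.

Lemma state1 : s e = 1.
Proof. by case: s_state. Qed.

Lemma stateD x y : s (x + y) = s x + s y.
Proof. by rewrite -[x]scale1r state_lin mul1r scale1r. Qed.

Lemma state0 : s 0 = 0.
Proof. by apply: (addrI (s 0)); rewrite -stateD !addr0. Qed.

Lemma stateZ (a : R) x : s (a *: x) = a * s x.
Proof. by rewrite -[a *: x]addr0 state_lin state0 addr0. Qed.

Lemma stateB x y : s (x - y) = s x - s y.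
Proof. by rewrite -scaleN1r stateD stateZ mulN1r. Qed.

Lemma state_le1 x : `|x| <= 2^-1 -> s x <= 1.
Proof.
by move=> /(exists_sqrt_e_sub jbV) [y yy]; have := state_sqr_ge0 y; rewrite yy stateB state1; lra.
Qed.

Lemma state_norm_le x : `|s x| <= 2 * `|x|.
Proof.
have [->|x0] := eqVneq x 0; first by rewrite state0 !normr0 mulr0.
have nx : 0 < `|x| by rewrite normr_gt0.
pose k := (2 * `|x|)^-1.
have k0 : 0 < k by rewrite invr_gt0 mulr_gt0.
have kx : `|k *: x| <= 2^-1.
  by rewrite normrZ gtr0_norm // /k invfM -mulrA mulVf ?mulr1 ?gt_eqF.
have /state_le1 : `|k *: - x| <= 2^-1 by rewrite scalerN normrN.
move: kx => /state_le1; rewrite !stateZ -scaleN1r stateZ mulN1r => h1 h2.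
have : k * `|s x| <= 1 by case: (ler0P (s x)) => _; lra.
by rewrite -ler_pdivlMl // /k invrK mulr1.
Qed.

End OneState.

Lemma states_eq_closure s1 s2 (A : set V) :
    is_state jm e s1 -> is_state jm e s2 -> (forall x, A x -> s1 x = s2 x) ->
  forall x, closure A x -> s1 x = s2 x.
Proof.
move=> s1_state s2_state s12A x /closure_normP clAx; apply/eqP; rewrite -subr_eq0.
rewrite -normr_le0; apply/ler_addgt0Pr => eps eps0; rewrite add0r.
have [d Ad xd] := clAx (eps / 4) (divr_gt0 eps0 (ltr0n _ 4)).
have -> : s1 x - s2 x = s1 (x - d) - s2 (x - d).
  by rewrite !stateB // (s12A d Ad); ring.
apply: le_trans (ler_normB _ _) _.
by have := state_norm_le s1_state (x - d); have := state_norm_le s2_state (x - d); lra.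
Qed.

End States.

Lemma cubic_nondecreasing (R : realFieldType) (b : R) : b ^+ 2 <= 3 ->
  {homo (fun t => t ^+ 3 + (b * t ^+ 2 + t)) : s t / s <= t}.
Proof.
move=> b3 s t st; rewrite -subr_ge0.
have -> : t ^+ 3 + (b * t ^+ 2 + t) - (s ^+ 3 + (b * s ^+ 2 + s)) =
  (t - s) * (3 / 4 * (t + s + 2 / 3 * b) ^+ 2 + (1 - b ^+ 2 / 3) + (t - s) ^+ 2 / 4).
  by field.
apply: mulr_ge0; first by rewrite subr_ge0.
by have := sqr_ge0 (t + s + 2 / 3 * b); have := sqr_ge0 (t - s); lra.
Qed.

Lemma sub_scale_middle (R : pzRingType) (W : lmodType R) (a b : R) (u v w : W) :
  (u + (a *: v + w)) - (u + (b *: v + w)) = (a - b) *: v.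
Proof. by rewrite opprD addrACA subrr add0r opprD addrACA subrr addr0 scalerBl. Qed.

Section MonotoneCalculusCone.
Variables (R : realType) (V : completeNormedModType R).
Variables (jm : V -> V -> V) (e : V) (C : set V).
Hypothesis jbV : unital_JB_algebra jm e.
Hypothesis C_fcalc : forall (c : V) (f : R -> R) (x : V), C c -> continuous f ->
  {homo f : s t / s <= t} -> fcalc jm e c f x -> C x.
Hypothesis C_add : forall c1 c2, C c1 -> C c2 -> C (c1 + c2).

Lemma C_jpeval p c : C c -> {homo horner p : s t / s <= t} -> C (jpeval jm e p c).
Proof.
move=> Cc p_nondecr.
apply: (C_fcalc Cc (@continuous_horner _ p) p_nondecr); exact: fcalc_jpeval.
Qed.

Lemma C_scale (a : R) c : 0 <= a -> C c -> C (a *: c).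
Proof.
move=> a0 Cc; have := C_jpeval (p := a *: 'X^1 + 0%:P) Cc.
rewrite jpeval_lin jpevalXn jpevalC (jpow1 jbV) scale0r !addr0; apply=> s t st.
by rewrite !hornerE; nra.
Qed.

Lemma C_shift (k : R) c : C c -> C (c + k *: e).
Proof.
move=> Cc; have := C_jpeval (p := 1 *: 'X^1 + k%:P) Cc.
rewrite jpeval_lin jpevalXn jpevalC (jpow1 jbV) !scale1r; apply=> s t st.
by rewrite !hornerE; lra.
Qed.

Lemma C_cubic (b : R) c : b ^+ 2 <= 3 -> C c ->
  C (jm c (jm c c) + (b *: jm c c + c)).
Proof.
move=> b3 Cc; have := C_jpeval (p := 1 *: 'X^3 + (b *: 'X^2 + (1 *: 'X^1 + 0%:P))) Cc.
rewrite !jpeval_lin !jpevalXn jpevalC (jpow1 jbV) /= !(jm1r jbV) !scale1r scale0r !addr0.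
apply=> s t st; have := cubic_nondecreasing b3 st.
by rewrite !hornerE.
Qed.

Definition Cpos : set V := C `|` [set k *: e | k in [set k : R | 0 <= k]].

Definition Cdiff : set V := [set u - v | u in Cpos & v in Cpos].

Lemma Cpos0 : Cpos 0.
Proof. by right; exists 0; rewrite ?scale0r /=. Qed.

Lemma Cpos_scale (a : R) u : 0 <= a -> Cpos u -> Cpos (a *: u).
Proof.
move=> a0 [Cu|[k k0 <-]]; first by left; apply: C_scale.
by right; exists (a * k); [exact: mulr_ge0 | rewrite scalerA].
Qed.

Lemma Cpos_add u v : Cpos u -> Cpos v -> Cpos (u + v).
Proof.
case=> [Cu|[k k0 <-]] [Cv|[l l0 <-]].
- by left; apply: C_add.
- by left; apply: C_shift.
- by left; rewrite addrC; apply: C_shift.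
- by right; exists (k + l); [exact: addr_ge0 | rewrite scalerDl].
Qed.

Lemma Cdiff_Cpos u : Cpos u -> Cdiff u.
Proof. by move=> Cu; exists u => //; exists 0; rewrite ?subr0 //; apply: Cpos0. Qed.

Lemma Cdiff1 : Cdiff e.
Proof. by apply: Cdiff_Cpos; right; exists 1; rewrite /= ?ler01 ?scale1r. Qed.

Lemma Cdiff_lin (a : R) x y : Cdiff x -> Cdiff y -> Cdiff (a *: x + y).
Proof.
move=> [u1 Cu1 [v1 Cv1 <-]] [u2 Cu2 [v2 Cv2 <-]].
have [a0|a0] := leP 0 a.
  exists (a *: u1 + u2); first by apply: Cpos_add => //; apply: Cpos_scale.
  exists (a *: v1 + v2); first by apply: Cpos_add => //; apply: Cpos_scale.
  by rewrite scalerBr opprD addrACA.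
have na0 : 0 <= - a by rewrite oppr_ge0 ltW.
exists (- a *: v1 + u2); first by apply: Cpos_add => //; apply: Cpos_scale.
exists (- a *: u1 + v2); first by apply: Cpos_add => //; apply: Cpos_scale.
by rewrite opprD addrACA -scalerBr scaleNr -scalerN opprB.
Qed.

Lemma CdiffZ (a : R) x : Cdiff x -> Cdiff (a *: x).
Proof. by move=> Dx; rewrite -[a *: x]addr0; apply: Cdiff_lin => //; apply: Cdiff_Cpos Cpos0. Qed.

Lemma CdiffD x y : Cdiff x -> Cdiff y -> Cdiff (x + y).
Proof. by move=> Dx Dy; rewrite -[x]scale1r; apply: Cdiff_lin. Qed.

Lemma CdiffB x y : Cdiff x -> Cdiff y -> Cdiff (x - y).
Proof. by move=> Dx Dy; rewrite addrC -scaleN1r; apply: Cdiff_lin. Qed.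

(* The nondecreasing cubics [t^3 + t^2 + t] and [t^3 - t^2 + t] differ by [2 t^2]. *)
Lemma Cdiff_sqr_Cpos u : Cpos u -> Cdiff (jm u u).
Proof.
case=> [Cu|[k _ <-]]; last first.
  by rewrite (jmZl jbV) (jmZr jbV) (jm1l jbV) scalerA; apply: CdiffZ Cdiff1.
have -> : jm u u = 2^-1 *: (jm u (jm u u) + (1 *: jm u u + u)
                            - (jm u (jm u u) + (-1 *: jm u u + u))).
  by rewrite sub_scale_middle opprK scalerA mulVf ?scale1r ?pnatr_eq0.
by apply/CdiffZ/CdiffB; apply/Cdiff_Cpos; left; apply: C_cubic Cu; rewrite ?sqrrN expr1n ?ler1n.
Qed.

Lemma Cdiff_jm_Cpos u v : Cpos u -> Cpos v -> Cdiff (jm u v).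
Proof.
move=> Cu Cv; rewrite (jm_polar jbV); apply/CdiffZ/CdiffB; first apply: CdiffB.
all: by apply: Cdiff_sqr_Cpos => //; apply: Cpos_add.
Qed.

Lemma Cdiff_sqr x : Cdiff x -> Cdiff (jm x x).
Proof.
move=> [u Cu [v Cv <-]].
rewrite (jm_sqrD jbV) (jmNr jbV) (jmNl jbV) (jmNr jbV) opprK scalerN.
apply: CdiffD; last exact: Cdiff_sqr_Cpos.
by apply: CdiffB; [apply: Cdiff_sqr_Cpos | apply/CdiffZ/Cdiff_jm_Cpos].
Qed.

Lemma Cdiff_jm x y : Cdiff x -> Cdiff y -> Cdiff (jm x y).
Proof.
move=> Dx Dy; rewrite (jm_polar jbV); apply/CdiffZ/CdiffB; first apply: CdiffB.
all: by apply: Cdiff_sqr => //; apply: CdiffD.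
Qed.

Lemma jordan_subalgebra_closure_Cdiff : jordan_subalgebra jm (closure Cdiff).
Proof.
split.
- by apply/subset_closure; rewrite -(scale0r e); apply: CdiffZ Cdiff1.
- exact: closure_lin Cdiff_lin.
- by move=> x y; apply: (closure_jm jbV Cdiff_jm).
- exact: closed_closure.
Qed.

Lemma states_eq_Cdiff s1 s2 : is_state jm e s1 -> is_state jm e s2 ->
  (forall c, C c -> s1 c = s2 c) -> forall x, Cdiff x -> s1 x = s2 x.
Proof.
move=> s1_state s2_state s12C.
have s12Cpos u : Cpos u -> s1 u = s2 u.
  case=> [/s12C //|[k _ <-]].
  by rewrite (stateZ s1_state) (stateZ s2_state) (state1 s1_state) (state1 s2_state).
by move=> _ [u Cu [v Cv <-]]; rewrite (stateB s1_state) (stateB s2_state) !s12Cpos.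
Qed.

Lemma closure_Cdiff_separates_pure :
  separates C (is_pure_state jm e) ->
  separates (closure Cdiff) [set phi | is_pure_state jm e phi \/ phi = (fun _ => 0)].
Proof.
have Ce : closure Cdiff e by apply/subset_closure/Cdiff1.
move=> C_sep phi psi [phi_pure|->] [psi_pure|->] phi_psi.
- have [c [Cc phi_psi_c]] := C_sep phi psi phi_pure psi_pure phi_psi.
  by exists c; split => //; apply/subset_closure/Cdiff_Cpos; left.
- by exists e; rewrite (state1 phi_pure.1); split => //; apply/eqP/oner_neq0.
- by exists e; rewrite (state1 psi_pure.1); split => //; apply/eqP; rewrite eq_sym oner_neq0.
- by [].
Qed.

Lemma separates_states_of_pure : strong_stone_weierstrass jm e ->
  separates C (is_pure_state jm e) -> separates C (is_state jm e).
Proof.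
move=> ssw C_sep s1 s2 s1_state s2_state s1_neq_s2; apply: contrapT => C_nosep.
have s12C c : C c -> s1 c = s2 c.
  by move=> Cc; apply: contrapT => s12c; apply: C_nosep; exists c.
have closure_CdiffT : closure Cdiff = setT.
  apply: ssw; first exact: jordan_subalgebra_closure_Cdiff.
  exact: closure_Cdiff_separates_pure.
have := states_eq_closure jbV s1_state s2_state (states_eq_Cdiff s1_state s2_state s12C).
by rewrite closure_CdiffT => s12; apply: s1_neq_s2; apply: funext => x; apply: s12.
Qed.

End MonotoneCalculusCone.

Theorem mainTheorem1 (R : realType) (V : completeNormedModType R)
  (jm : V -> V -> V) (e : V) (C : set V) :
  unital_JB_algebra jm e ->
  strong_stone_weierstrass jm e ->
  separates C (is_pure_state jm e) ->
  (forall (c : V) (f : R -> R) (x : V), C c -> continuous f ->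
     {homo f : s t / s <= t} -> fcalc jm e c f x -> C x) ->
  closed C ->
  (forall c1 c2, C c1 -> C c2 -> C (c1 + c2)) ->
  separates C (is_state jm e).
Proof.
move=> jbV ssw C_sep C_fcalc _ C_add.
exact: separates_states_of_pure jbV C_fcalc C_add ssw C_sep.
Qed.
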